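(* Let $q$ be an odd prime power, $n\ge 5$, and let $M$ be an $n\times n$ matrix with entries in $\mathbb{F}_q$. Then $0\in\mathrm{Num}'_0(M)_q$.
   Context: For $M=(m_{ij})$ with entries in $\mathbb{F}_q$ and $u=(x_1,\dots,x_n)\in\mathbb{F}_q^n$, with the Hermitian form $\langle u,v\rangle=\sum_i u_i^qv_i$ one has $\langle u,u\rangle=\sum_i x_i^2$ and $\langle u,Mu\rangle=\sum_{i,j}m_{ij}x_ix_j$. $\mathrm{Num}'_0(M)_q=\{\langle u,Mu\rangle: u\in\mathbb{F}_q^n\setminus\{0\},\ \langle u,u\rangle=0\}$. *)

From HB Require Import structures.
From mathcomp Require Import all_boot all_order all_algebra all_field.
Set Implicit Arguments. Unset Strict Implicit. Unset Printing Implicit Defensive.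
Import GRing.Theory.
Local Open Scope ring_scope.

(* The field F_q is an arbitrary finite field F, with q = #|F|. *)

Definition herm (F : finFieldType) (n : nat) (u v : 'cV[F]_n) : F :=
  \sum_(i < n) (u i 0) ^+ #|F| * v i 0.

Definition in_Num0' (F : finFieldType) (n : nat) (M : 'M[F]_n) (z : F) : Prop :=
  exists u : 'cV[F]_n, u != 0 /\ herm u u = 0 /\ herm u (M *m u) = z.

From mathcomp Require Import all_boot all_order all_algebra all_field.
From mathcomp Require Import mpoly zify.
Set Implicit Arguments. Unset Strict Implicit. Unset Printing Implicit Defensive.
Import GRing.Theory.
Local Open Scope ring_scope.

(* Since u_i ^ q = u_i on F_q, both <u, u> and <u, M u> are quadratic forms in
   the coordinates of u, and two quadratic forms in n >= 5 > 2 + 2 variables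
   have a common nontrivial zero by the Chevalley-Warning theorem: the
   polynomial P = prod_f (1 - f ^ (q - 1)) is the indicator function of the
   common zeros and has degree < n (q - 1), so each of its monomials, hence P
   itself, sums to 0 over F_q^n.  The number of common zeros is thus divisible
   by the characteristic, and the trivial zero cannot be the only one. *)

Section FinFieldPowerSums.
Variable F : finFieldType.

Lemma natr_card_finField : (#|F|%:R : F) = 0.
Proof.
have : \sum_(t : F) t = \sum_(t : F) (1 + t) := reindex_inj (addrI 1).
by rewrite big_split /= sumr_const cardT -cardE -[LHS]add0r => /addIr <-.
Qed.

Lemma expf_card_pred (x : F) : x != 0 -> x ^+ #|F|.-1 = 1.
Proof.
move=> nz_x; apply: (mulIf nz_x).
by rewrite mul1r -exprSr prednK ?expf_card // (ltn_trans _ (finNzRing_gt1 F)).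
Qed.

Lemma subr1_expf_card_pred (x : F) : 1 - x ^+ #|F|.-1 = (x == 0)%:R.
Proof.
have [->|nz_x] := eqVneq x 0; last by rewrite expf_card_pred ?subrr.
by rewrite expr0n -subn1 subn_eq0 leqNgt finNzRing_gt1 subr0.
Qed.

Lemma exists_expr_neq1 k :
  (0 < k < #|F|.-1)%N -> exists2 c : F, c != 0 & c ^+ k != 1.
Proof.
case/andP=> k_gt0 k_lt.
have [c /andP[nz_c ck] | all_roots] := pickP [pred c : F | (c != 0) && (c ^+ k != 1)].
  by exists c.
have roots : all (root ('X^k - 1%:P)) (enum (predC1 (0 : F))).
  apply/allP=> x; rewrite mem_enum inE => nz_x.
  by move: (all_roots x); rewrite /= nz_x /root !hornerE subr_eq0 => /negbFE.
have := max_poly_roots _ roots (enum_uniq _).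
rewrite -size_poly_eq0 size_XnsubC // -cardE cardC1 => /(_ isT).
by rewrite ltnS leqNgt k_lt.
Qed.

Lemma sum_expr_finField k : (k < #|F|.-1)%N -> \sum_(t : F) t ^+ k = 0.
Proof.
case: k => [|k] k_lt.
  under eq_bigr do rewrite expr0.
  by rewrite sumr_const cardT -cardE natr_card_finField.
have [c nz_c ck] := exists_expr_neq1 (k := k.+1) k_lt.
have : \sum_(t : F) t ^+ k.+1 = \sum_(t : F) (c * t) ^+ k.+1 := reindex_inj (mulfI nz_c).
under [RHS]eq_bigr do rewrite exprMn.
rewrite -mulr_sumr -[X in X = _]mul1r.
by move/eqP; rewrite -subr_eq0 -mulrBl mulf_eq0 subr_eq0 eq_sym (negbTE ck) => /eqP.
Qed.

End FinFieldPowerSums.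

Section MpolyDegree.
Variables (R : idomainType) (n : nat).
Implicit Types p q : {mpoly R[n]}.

Lemma msizeM_pred_le p q :
  ((msize (p * q)).-1 <= (msize p).-1 + (msize q).-1)%N.
Proof.
have [->|nz_p] := eqVneq p 0; first by rewrite mul0r msize0.
have [->|nz_q] := eqVneq q 0; first by rewrite mulr0 msize0.
have : (0 < msize p)%N by rewrite lt0n msize_poly_eq0.
have : (0 < msize q)%N by rewrite lt0n msize_poly_eq0.
by rewrite msizeM //; move: (msize p) (msize q) => a b; lia.
Qed.

Lemma msize_prod_pred_le (I : Type) (r : seq I) (P : I -> {mpoly R[n]}) :
  ((msize (\prod_(i <- r) P i)).-1 <= \sum_(i <- r) (msize (P i)).-1)%N.
Proof.
elim: r => [|i r IH]; first by rewrite !big_nil msize1.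
rewrite !big_cons; apply: leq_trans (msizeM_pred_le _ _) _.
by rewrite leq_add2l.
Qed.

Lemma msizeX_pred_le p k : ((msize (p ^+ k)).-1 <= k * (msize p).-1)%N.
Proof.
rewrite -[k in p ^+ k]card_ord -prodr_const.
by apply: leq_trans (msize_prod_pred_le _ _) _; rewrite sum_nat_const card_ord.
Qed.

Lemma msize1B_pred_le p : ((msize (1 - p)).-1 <= (msize p).-1)%N.
Proof.
have := msizeD_le 1 (- p); rewrite mmeasureN msize1.
by move: (msize (1 - p)) (msize p) => a b; lia.
Qed.

End MpolyDegree.

Section ChevalleyWarning.
Variables (F : finFieldType) (n : nat).

Lemma sum_prod_expr_finField (m : 'X_{1..n}) :
  (mdeg m < n * #|F|.-1)%N -> \sum_(x : {ffun 'I_n -> F}) \prod_i x i ^+ m i = 0.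
Proof.
move=> deg_m; rewrite -(bigA_distr_bigA (fun i (t : F) => t ^+ m i)) /=.
have [i /= small_i | large] := pickP [pred i : 'I_n | (m i < #|F|.-1)%N].
  by rewrite (bigD1 i) //= sum_expr_finField // mul0r.
suff : (n * #|F|.-1 <= mdeg m)%N by rewrite leqNgt deg_m.
rewrite mdegE -[n in (n * _)%N]card_ord -sum_nat_const.
by apply: leq_sum => i _; move: (large i) => /= /negbT; rewrite -leqNgt.
Qed.

Lemma sum_meval_finField (p : {mpoly F[n]}) :
  (msize p <= n * #|F|.-1)%N -> \sum_(x : {ffun 'I_n -> F}) p.@[x] = 0.
Proof.
move=> size_p; under eq_bigr do rewrite mevalE.
rewrite exchange_big /= big1_seq // => m /andP[_ m_supp].
by rewrite -mulr_sumr sum_prod_expr_finField ?mulr0 // (leq_trans (msize_mdeg_lt m_supp)).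
Qed.

Definition mzeros (fs : seq {mpoly F[n]}) : {set {ffun 'I_n -> F}} :=
  [set x : {ffun 'I_n -> F} | all (fun f : {mpoly F[n]} => f.@[x] == 0) fs].

Lemma meval_prod_1B_expr (fs : seq {mpoly F[n]}) (x : {ffun 'I_n -> F}) :
  (\prod_(f <- fs) (1 - f ^+ #|F|.-1)).@[x] = (x \in mzeros fs)%:R.
Proof.
rewrite inE; elim: fs => [|f fs IH]; first by rewrite big_nil meval1 /= mulr1n.
by rewrite big_cons mevalM mevalB meval1 rmorphXn IH subr1_expf_card_pred -natrM mulnb.
Qed.

Theorem chevalley_warning (fs : seq {mpoly F[n]}) :
  (\sum_(f <- fs) (msize f).-1 < n)%N -> (#|mzeros fs|%:R : F) = 0.
Proof.
move=> deg_fs; set P := \prod_(f <- fs) (1 - f ^+ #|F|.-1).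
have k_gt0 : (0 < #|F|.-1)%N by rewrite -subn1 subn_gt0 finNzRing_gt1.
have deg_P : ((msize P).-1 <= #|F|.-1 * \sum_(f <- fs) (msize f).-1)%N.
  apply: leq_trans (msize_prod_pred_le _ _) _; rewrite big_distrr /=.
  apply: leq_sum => f _; apply: leq_trans (msize1B_pred_le _) _.
  exact: msizeX_pred_le.
have size_P : (msize P <= n * #|F|.-1)%N.
  by move: deg_P deg_fs; move: (msize P) (\sum_(f <- fs) _)%N => a b; nia.
rewrite -(sum_meval_finField size_P); under eq_bigr do rewrite meval_prod_1B_expr.
by rewrite -natr_sum -sum1_card big_mkcond.
Qed.

Corollary chevalley (fs : seq {mpoly F[n]}) :
  (\sum_(f <- fs) (msize f).-1 < n)%N -> {in fs, forall f, f.@[fun=> 0] = 0} ->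
  exists2 x, x != 0 & x \in mzeros fs.
Proof.
move=> deg_fs fs0; have := chevalley_warning deg_fs.
have [x /andP[nz_x zx] | no_nontrivial] :=
  pickP [pred x | (x != 0) && (x \in mzeros fs)]; first by exists x.
suff -> : mzeros fs = [set (0 : {ffun 'I_n -> F})].
  by rewrite cards1 => /eqP; rewrite oner_eq0.
apply/setP=> x; rewrite !inE; have [->|nz_x] := eqVneq x 0.
  apply/allP=> f /fs0 <-; apply/eqP/meval_eq => i.
  by rewrite ffunE.
by move: (no_nontrivial x); rewrite /= nz_x inE.
Qed.

End ChevalleyWarning.

Section QuadraticForms.
Variables (R : idomainType) (n : nat).

Definition mquad (A : 'M[R]_n) : {mpoly R[n]} :=
  \sum_i \sum_j A i j *: ('X_i * 'X_j).

Lemma meval_mquad (A : 'M[R]_n) (v : 'I_n -> R) :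
  (mquad A).@[v] = \sum_i \sum_j A i j * (v i * v j).
Proof.
rewrite raddf_sum; apply: eq_bigr => i _; rewrite raddf_sum.
by apply: eq_bigr => j _; rewrite /= mevalZ mevalM !mevalXU.
Qed.

Lemma mquad_meval0 (A : 'M[R]_n) : (mquad A).@[fun=> 0] = 0.
Proof.
rewrite meval_mquad big1 // => i _.
by rewrite big1 // => j _; rewrite mul0r mulr0.
Qed.

Lemma msize_mquad (A : 'M[R]_n) : ((msize (mquad A)).-1 <= 2)%N.
Proof.
rewrite -subn1 leq_subLR.
apply: leq_trans (mmeasure_sum _ _ _ _) _; apply/bigmax_leqP_seq => i _ _.
apply: leq_trans (mmeasure_sum _ _ _ _) _; apply/bigmax_leqP_seq => j _ _.
apply: leq_trans (msizeZ_le _ _) _.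
by rewrite -mpolyXD msizeX mdegD !mdeg1.
Qed.

End QuadraticForms.

Lemma herm_col_mulmx (F : finFieldType) n (A : 'M[F]_n) (x : 'I_n -> F) :
  herm (\col_i x i) (A *m \col_i x i) = (mquad A).@[x].
Proof.
rewrite meval_mquad /herm; apply: eq_bigr => i _.
rewrite !mxE expf_card mulr_sumr; apply: eq_bigr => j _.
by rewrite !mxE mulrCA.
Qed.

Theorem corollary3 (F : finFieldType) (n : nat) (M : 'M[F]_n) :
  odd #|F| -> (5 <= n)%N -> in_Num0' M 0.
Proof.
(* Chevalley's theorem needs no assumption on the parity of q. *)
move=> _ n_ge5.
have [x nz_x] : exists2 x, x != 0 & x \in mzeros [:: mquad 1%:M; mquad M].
  apply: chevalley => [|f]; last by rewrite !inE => /orP[]/eqP->; exact: mquad_meval0.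
  rewrite !big_cons big_nil addn0; apply: leq_trans n_ge5.
  by rewrite ltnS (leq_add (msize_mquad _) (msize_mquad _)).
rewrite inE /= andbT => /andP[/eqP isotropic /eqP value0].
exists (\col_i x i); split; last split.
- apply: contraNneq nz_x => /matrixP x0; apply/eqP/ffunP => i.
  by move: (x0 i 0); rewrite !mxE ffunE.
- by rewrite -[X in herm _ X]mul1mx herm_col_mulmx.
- by rewrite herm_col_mulmx.
Qed.
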